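(* Consider the disclosure model described in the context, and let $d_0$ be the uninformative disclosure policy $d_0(e)=\bar e$ for all $e\in E$. Then $d_0\in\mathcal{D}$, and for every $d\in\mathcal{D}$ we have $\Gamma(d_0)\ge\Gamma(d)$ and $\Pi(d_0)\le\Pi(d)$. That is, $d_0$ induces the highest expected emission and the lowest expected profit among all disclosure policies.
   Context: Emissions lie in $E=[0,\bar e]$ with $\bar e>0$. The firm's type $\theta\in\Theta=[\underline\theta,\bar\theta]$ is private information with a continuous density $f=F'$ on $\Theta$. The firm's profit is $\tilde\pi(\theta,e,\tilde e)$ with actual emission $e$ and market-perceived emission $\tilde e$; it is strictly increasing in $e$ and strictly decreasing in $\tilde e$. Standing assumptions: $\tilde\pi$ is continuous on $\Theta\times E\times E$ and $C^2$ on its interior; $\pi(\theta,e):=\tilde\pi(\theta,e,e)$ is strictly concave in $e$; and $\pi(\theta,0)<\pi(\theta,\bar e)$ for all $\theta$. A disclosure policy is a function $d:E\to E$ (a partition of $E$ into level sets). An emission $e$ is belief-compatible under $d$ if $e\ge e'$ whenever $d(e')=d(e)$; $\tilde E_d$ is the set of such levels. The type-$\theta$ firm chooses $e\in\tilde E_d$ maximizing $\pi(\theta,e)$. $\mathcal{D}$ is the set of policies for which the maximum is attained for every type. For $d\in\mathcal{D}$, $\pi_d(\theta)=\max_{e\in\tilde E_d}\pi(\theta,e)$, and $\gamma_d(\theta)$ is the lowest maximizer (the equilibrium emission). Further, $\Pi(d)=\int_\Theta\pi_d\,dF$ and $\Gamma(d)=\int_\Theta\gamma_d\,dF$. *)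

From HB Require Import structures.
From mathcomp Require Import all_boot all_order all_algebra.
From mathcomp Require Import all_classical all_reals all_analysis.
Set Implicit Arguments. Unset Strict Implicit. Unset Printing Implicit Defensive.
Import Order.TTheory GRing.Theory Num.Theory.
Import numFieldNormedType.Exports.
Local Open Scope classical_set_scope.
Local Open Scope ring_scope.

Section Model.
Variable R : realType.

Definition Eset (ebar : R) : set R := [set` `[0, ebar]].

Definition uncurry3 (pt : R -> R -> R -> R) : (R * R) * R -> R :=
  fun p => pt p.1.1 p.1.2 p.2.

Definition C2_on (A : set ((R * R) * R)) (g : (R * R) * R -> R) : Prop :=
  (forall x u, A x -> derivable g x u) /\
  (forall x u v, A x -> derivable ('D_u g) x v) /\
  (forall x u v, A x -> {for x, continuous ('D_v ('D_u g))}).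

Definition strictly_concave_on (S : set R) (h : R -> R) : Prop :=
  forall x y t, S x -> S y -> x != y -> 0 < t < 1 ->
    t * h x + (1 - t) * h y < h (t * x + (1 - t) * y).

Definition profit (pt : R -> R -> R -> R) (th e : R) : R := pt th e e.

Definition policy (ebar : R) (d : R -> R) : Prop :=
  forall e, Eset ebar e -> Eset ebar (d e).

Definition belief_compatible (ebar : R) (d : R -> R) : set R :=
  [set e | Eset ebar e /\ forall e', Eset ebar e' -> d e' = d e -> e' <= e].

Definition in_D (ebar lo hi : R) (pt : R -> R -> R -> R) (d : R -> R) : Prop :=
  forall th, [set` `[lo, hi]] th ->
    exists2 e, belief_compatible ebar d e &
      forall e', belief_compatible ebar d e' -> profit pt th e' <= profit pt th e.

(* pi_d(theta) = max_{e in E~_d} pi(theta, e) (a sup, which is the max for d in D) *)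
Definition pi_d (ebar : R) (pt : R -> R -> R -> R) (d : R -> R) (th : R) : R :=
  sup [set profit pt th e | e in belief_compatible ebar d].

(* gamma_d(theta) = the lowest maximizer (an inf, which is the min when it exists) *)
Definition gamma_d (ebar : R) (pt : R -> R -> R -> R) (d : R -> R) (th : R) : R :=
  inf [set e | belief_compatible ebar d e /\ profit pt th e = pi_d ebar pt d th].

(* Pi(d) = int_Theta pi_d dF, Gamma(d) = int_Theta gamma_d dF, with dF = f dtheta *)
Definition Pi (ebar lo hi : R) (f : R -> R) (pt : R -> R -> R -> R) (d : R -> R)
  : \bar R :=
  (\int[@lebesgue_measure R]_(th in [set` `[lo, hi]]) (pi_d ebar pt d th * f th)%:E)%E.

Definition Gamma (ebar lo hi : R) (f : R -> R) (pt : R -> R -> R -> R) (d : R -> R)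
  : \bar R :=
  (\int[@lebesgue_measure R]_(th in [set` `[lo, hi]]) (gamma_d ebar pt d th * f th)%:E)%E.

Definition d0 (ebar : R) : R -> R := fun _ => ebar.

End Model.

(* The highest emission level ebar is belief-compatible under every policy,
   since no level of E exceeds it, and under the uninformative policy d0 it
   is the only one.  Hence every type can always fall back on ebar: its
   equilibrium profit under any d is at least pi(theta, ebar) = pi_d0(theta),
   and its lowest maximizer is at most ebar = gamma_d0(theta).  Integrating
   these pointwise inequalities against the density f gives the claim. *)

From HB Require Import structures.
From mathcomp Require Import all_boot all_order all_algebra.
From mathcomp Require Import all_classical all_reals all_analysis.
Import Order.TTheory GRing.Theory Num.Theory.
Import numFieldNormedType.Exports.
Local Open Scope classical_set_scope.
Local Open Scope ring_scope.

(* pi_d and gamma_d need not be measurable, so the library's monotonicity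
   lemmas do not apply; monotonicity still holds because the integral of a
   nonnegative function is a supremum over the simple functions below it. *)
Section integral_monotone_nomeas.
Context d (T : measurableType d) (R : realType) (mu : {measure set T -> \bar R}).
Local Open Scope ereal_scope.

Lemma ge0_le_integral_nomeas (D : set T) (f g : T -> \bar R) :
  (forall x, D x -> 0 <= f x) -> (forall x, D x -> f x <= g x) ->
  \int[mu]_(x in D) f x <= \int[mu]_(x in D) g x.
Proof.
move=> f0 fg.
have g0 x : D x -> 0 <= g x by move=> Dx; exact: le_trans (f0 x Dx) (fg x Dx).
rewrite (ge0_integralE mu f0) (ge0_integralE mu g0) /=.
apply: ge_ereal_sup => _ [h hf <-]; apply: ereal_sup_ubound; exists h => //= x.
apply: le_trans (hf x) _; rewrite /patch; case: ifP => // /set_mem Dx.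
exact: fg.
Qed.

Lemma le_integral_nomeas (D : set T) (f g : T -> \bar R) :
  (forall x, D x -> f x <= g x) ->
  \int[mu]_(x in D) f x <= \int[mu]_(x in D) g x.
Proof.
move=> fg; rewrite (integralE mu D f) (integralE mu D g).
have fgD : {in D, forall x, f x <= g x} by move=> x /set_mem; exact: fg.
apply: leeB; apply: ge0_le_integral_nomeas => x Dx.
- exact: funepos_ge0.
- by apply: (funepos_le fgD); apply/mem_set.
- exact: funeneg_ge0.
- by apply: (funeneg_le fgD); apply/mem_set.
Qed.

End integral_monotone_nomeas.

Section belief_compatible.
Context (R : realType) (ebar : R).

Lemma Eset_ebar : 0 < ebar -> Eset ebar ebar.
Proof. by move=> ebar_gt0; rewrite /Eset /= in_itv /= lexx ltW. Qed.

Lemma belief_compatible_ebar (d : R -> R) :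
  0 < ebar -> belief_compatible ebar d ebar.
Proof.
move=> ebar_gt0; split; first exact: Eset_ebar.
by move=> e'; rewrite /Eset /= in_itv /= => /andP[].
Qed.

Lemma belief_compatible_d0 : 0 < ebar -> belief_compatible ebar (d0 ebar) = [set ebar].
Proof.
move=> ebar_gt0; apply/seteqP; split => e /=; last first.
  by move=> ->; exact: belief_compatible_ebar.
case; rewrite /Eset /= in_itv /= => /andP[_ e_le] maxe.
by apply/eqP; rewrite eq_le e_le (maxe ebar (Eset_ebar ebar_gt0)).
Qed.

Lemma pi_d0E (pt : R -> R -> R -> R) (th : R) :
  0 < ebar -> pi_d ebar pt (d0 ebar) th = profit pt th ebar.
Proof. by move=> ebar_gt0; rewrite /pi_d belief_compatible_d0 // image_set1 sup1. Qed.

Lemma gamma_d0E (pt : R -> R -> R -> R) (th : R) :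
  0 < ebar -> gamma_d ebar pt (d0 ebar) th = ebar.
Proof.
move=> ebar_gt0; rewrite /gamma_d pi_d0E // belief_compatible_d0 //.
have -> : [set e | [set ebar] e /\ profit pt th e = profit pt th ebar] = [set ebar].
  by apply/seteqP; split => e /=; [case | move=> ->].
exact: inf1.
Qed.

End belief_compatible.

Section maximizer.
Context (R : realType) (ebar : R) (pt : R -> R -> R -> R) (d : R -> R) (th e : R).
Hypothesis bc_e : belief_compatible ebar d e.
Hypothesis max_e :
  forall e', belief_compatible ebar d e' -> profit pt th e' <= profit pt th e.

Lemma pi_d_maximizer : pi_d ebar pt d th = profit pt th e.
Proof.
apply/eqP; rewrite eq_le; apply/andP; split.
  by apply: ge_sup; [exists (profit pt th e), e | move=> _ [x bc_x <-]; exact: max_e].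
apply: ub_le_sup; last by exists e.
by exists (profit pt th e) => _ [x bc_x <-]; exact: max_e.
Qed.

Lemma gamma_d_le_maximizer : gamma_d ebar pt d th <= e.
Proof.
apply: ge_inf; last by split; rewrite // pi_d_maximizer.
by exists 0 => x [[]]; rewrite /Eset /= in_itv /= => /andP[].
Qed.

Lemma gamma_d_le_ebar : gamma_d ebar pt d th <= ebar.
Proof.
apply: le_trans gamma_d_le_maximizer _.
by case: bc_e; rewrite /Eset /= in_itv /= => /andP[].
Qed.

Lemma profit_ebar_le_pi_d : 0 < ebar -> profit pt th ebar <= pi_d ebar pt d th.
Proof.
by move=> ebar_gt0; rewrite pi_d_maximizer; apply/max_e/belief_compatible_ebar.
Qed.

End maximizer.

Theorem proposition2 (R : realType) (ebar lo hi : R) (f : R -> R)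
  (pt : R -> R -> R -> R)
  (Hebar : 0 < ebar)
  (Hlohi : lo < hi)
  (* f is a continuous probability density on Theta = [lo, hi] *)
  (Hf_cont : {within [set` `[lo, hi]], continuous f})
  (Hf_ge0 : forall th, [set` `[lo, hi]] th -> 0 <= f th)
  (Hf_one : (\int[@lebesgue_measure R]_(th in [set` `[lo, hi]]) (f th)%:E = 1)%E)
  (* pt continuous on Theta x E x E and C^2 on its interior *)
  (Hpt_cont : {within ([set` `[lo, hi]] `*` Eset ebar) `*` Eset ebar,
               continuous (uncurry3 pt)})
  (Hpt_C2 : C2_on (([set` `]lo, hi[] `*` [set` `]0, ebar[]) `*` [set` `]0, ebar[]) (uncurry3 pt))
  (* strictly increasing in actual emission e *)
  (Hpt_inc : forall th e1 e2 et, [set` `[lo, hi]] th -> Eset ebar e1 -> Eset ebar e2 ->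
      Eset ebar et -> e1 < e2 -> pt th e1 et < pt th e2 et)
  (* strictly decreasing in perceived emission e~ *)
  (Hpt_dec : forall th e et1 et2, [set` `[lo, hi]] th -> Eset ebar e -> Eset ebar et1 ->
      Eset ebar et2 -> et1 < et2 -> pt th e et2 < pt th e et1)
  (* pi(theta, .) strictly concave *)
  (Hpi_conc : forall th, [set` `[lo, hi]] th -> strictly_concave_on (Eset ebar) (profit pt th))
  (Hpi_end : forall th, [set` `[lo, hi]] th -> profit pt th 0 < profit pt th ebar) :
  in_D ebar lo hi pt (d0 ebar) /\
  forall d : R -> R, policy ebar d -> in_D ebar lo hi pt d ->
    (Gamma ebar lo hi f pt d <= Gamma ebar lo hi f pt (d0 ebar))%E /\
    (Pi ebar lo hi f pt (d0 ebar) <= Pi ebar lo hi f pt d)%E.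
Proof.
split.
  move=> th _; exists ebar; first exact: belief_compatible_ebar.
  by move=> e; rewrite belief_compatible_d0 // => ->.
move=> d _ inD; split; apply: le_integral_nomeas => th Theta_th;
  rewrite lee_fin; (apply: ler_wpM2r; first exact: Hf_ge0);
  have [e bc_e max_e] := inD th Theta_th.
- by rewrite gamma_d0E //; exact: gamma_d_le_ebar bc_e max_e.
- by rewrite pi_d0E //; exact: profit_ebar_le_pi_d bc_e max_e Hebar.
Qed.
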